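(* Let $f(n,k)$ be the number of sets of exactly $k$ distinct integers $1\le p_1<p_2<\cdots<p_k\le n$ with $p_1+\cdots+p_j\le p_{j+1}$ for $1\le j\le k-1$. Then $f(n,0)=1$ for all $n\ge0$, and for $n\ge1$, $k\ge1$, $$f(n,k)=\sum_{p=0}^{\min\{k-1,\,n-\gamma(k)\}}\ \sum_{m=p}^{n-\gamma(k)}\bigl(n-\gamma(k)+1-m\bigr)\,a(m,p),$$ where an empty sum (in particular when $n<\gamma(k)$) is $0$.
   Context: A partition $n=p_1+\cdots+p_k$ with $1\le p_1\le\cdots\le p_k$ is non-squashing if $p_1+\cdots+p_j\le p_{j+1}$ for all $1\le j\le k-1$. $a(m,p)$ is the number of non-squashing partitions of $m$ into exactly $p$ parts (with $a(0,0)=1$ for the empty partition and $a(m,0)=0$ for $m\ge1$). The function $\gamma$ is defined by $\gamma(i)=i$ for $1\le i\le3$ and $\gamma(i)=3\cdot2^{i-3}$ for $i\ge3$ (so $\gamma$ takes values $1,2,3,6,12,24,\dots$). *)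

From mathcomp Require Import all_boot.
Set Implicit Arguments. Unset Strict Implicit. Unset Printing Implicit Defensive.

(* Non-squashing condition on a sequence s = [:: p_1; ...; p_k]:
   p_1 + ... + p_j <= p_{j+1} for all 1 <= j <= k-1
   (nth uses 0-based indices: p_{j+1} = nth 0 s j, p_1+...+p_j = sumn (take j s)). *)
Definition nonsquash (s : seq nat) : bool :=
  all (fun j => sumn (take j s) <= nth 0 s j) (iota 1 (size s).-1).

Definition a (m p : nat) : nat :=
  #|[set t : p.-tuple 'I_m.+1 |
      let s := map (@nat_of_ord _) t in
      [&& sumn s == m, all (fun x => 0 < x) s, sorted leq s & nonsquash s]]|.

Definition gamma (i : nat) : nat := if i <= 3 then i else 3 * 2 ^ (i - 3).

Definition f (n k : nat) : nat :=
  #|[set t : k.-tuple 'I_n.+1 |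
      let s := map (@nat_of_ord _) t in
      [&& all (fun x => 0 < x) s, sorted ltn s & nonsquash s]]|.

From mathcomp Require Import all_boot zify.
Set Implicit Arguments. Unset Strict Implicit. Unset Printing Implicit Defensive.

(* Subtracting gamma(i) from the i-th part maps the strictly increasing
   non-squashing k-sets in [1, n] bijectively onto the weakly increasing
   non-squashing sequences q_1, ..., q_k of nonnegative integers with
   q_k <= N := n - gamma(k): the conditions p_1 >= 1 and p_2 > p_1 become
   q_1 >= 0 and q_2 >= q_1, and since gamma(1) + ... + gamma(j) = gamma(j+1)
   for j >= 2 the remaining non-squashing inequalities are unchanged.  If the
   first k-1 entries sum to m, the last one ranges over N + 1 - m values, and
   removing the leading zeros of the first k-1 entries leaves a non-squashing
   partition of m into p <= k-1 parts. *)

Fixpoint bounded_seqs (r b : nat) : seq (seq nat) :=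
  if r is r'.+1 then [seq x :: s | x <- iota 0 b, s <- bounded_seqs r' b]
  else [:: [::]].

Lemma mem_bounded_seqs r b s :
  (s \in bounded_seqs r b) = (size s == r) && all (fun x => x < b) s.
Proof.
elim: r s => [|r IH] [|x s] //=.
  by apply/negbTE/allpairsP => -[[y t] [_ _]].
rewrite eqSS; apply/allpairsP/idP => [[[y t] /= [y_lt t_in [-> ->]]]|].
  by rewrite mem_iota /= add0n in y_lt; rewrite y_lt -IH t_in.
case/andP=> size_s /andP[x_lt s_lt]; exists (x, s) => /=.
by rewrite mem_iota /= add0n x_lt IH size_s s_lt.
Qed.

Lemma uniq_bounded_seqs r b : uniq (bounded_seqs r b).
Proof.
elim: r => [|r IH] //=; apply: allpairs_uniq => //; first exact: iota_uniq.
by move=> [x s] [y t] _ _ /= [-> ->].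
Qed.

Lemma big_bounded_seqsS r b (F : seq nat -> nat) :
  \sum_(s <- bounded_seqs r.+1 b) F s =
  \sum_(0 <= x < b) \sum_(s <- bounded_seqs r b) F (x :: s).
Proof. by rewrite /= big_allpairs_dep /= /index_iota subn0. Qed.

Arguments bounded_seqs : simpl never.

Lemma bounded_seqs0 b : bounded_seqs 0 b = [:: [::]].
Proof. by []. Qed.

Lemma count_sumE (T : Type) (P : pred T) (s : seq T) : count P s = \sum_(x <- s) P x.
Proof. by rewrite -sum1_count big_mkcond; apply: eq_bigr => x _; case: (P x). Qed.

Lemma count_bounded_seqsS r b (P : pred (seq nat)) :
  count P (bounded_seqs r.+1 b) =
  \sum_(0 <= x < b) count (fun s => P (x :: s)) (bounded_seqs r b).
Proof.
by rewrite count_sumE big_bounded_seqsS; apply: eq_bigr => x _; rewrite count_sumE.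
Qed.

Lemma count_bounded_seqs_rcons r b (P : pred (seq nat)) :
  count P (bounded_seqs r.+1 b) =
  \sum_(s <- bounded_seqs r b) count (fun x => P (rcons s x)) (iota 0 b).
Proof.
elim: r P => [|r IH] P.
  rewrite count_bounded_seqsS bounded_seqs0 big_seq1 count_sumE /index_iota subn0.
  by apply: eq_bigr => x _; rewrite /= addn0.
rewrite count_bounded_seqsS big_bounded_seqsS.
by apply: eq_bigr => x _; rewrite IH.
Qed.

Lemma card_bounded_seqs r b (P : pred (seq nat)) :
  #|[set t : r.-tuple 'I_b.+1 | P (map (@nat_of_ord _) t)]| =
  count P (bounded_seqs r b.+1).
Proof.
rewrite -sum1_card big_mkcond /= count_sumE.
rewrite (eq_bigr (fun t : r.-tuple 'I_b.+1 => nat_of_bool (P (map (@nat_of_ord _) t))));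
  last by move=> t _; rewrite inE; case: (P _).
rewrite -(big_map (fun t : r.-tuple 'I_b.+1 => map (@nat_of_ord _) t) xpredT
  (fun s => nat_of_bool (P s))).
apply: perm_big; apply: uniq_perm.
- rewrite map_inj_uniq ?index_enum_uniq // => t1 t2 /= eq_t.
  exact/val_inj/(inj_map val_inj eq_t).
- exact: uniq_bounded_seqs.
move=> s; rewrite mem_bounded_seqs; apply/mapP/idP => [[t _ ->]|].
  rewrite size_map size_tuple eqxx /=.
  by apply/allP => x /mapP [y _ ->].
case/andP=> /eqP size_s s_lt.
have size_s' : size (map (@inord b) s) == r by rewrite size_map size_s.
exists (Tuple size_s'); first by rewrite mem_index_enum.
rewrite /= -map_comp -[LHS]map_id; apply/eq_in_map => x x_in /=.
by rewrite inordK //; apply: (allP s_lt).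
Qed.

Lemma count_le_in_inj (T1 T2 : eqType) (s1 : seq T1) (s2 : seq T2)
    (P1 : pred T1) (P2 : pred T2) (g : T1 -> T2) (h : T2 -> T1) :
  uniq s1 ->
  {in [seq x <- s1 | P1 x], forall x, g x \in [seq y <- s2 | P2 y] /\ h (g x) = x} ->
  count P1 s1 <= count P2 s2.
Proof.
move=> uniq_s1 gP; rewrite -!size_filter -(size_map g); apply: uniq_leq_size.
  rewrite map_inj_in_uniq ?filter_uniq // => x y /gP[_ gxK] /gP[_ gyK] eq_g.
  by rewrite -gxK eq_g gyK.
by move=> _ /mapP[x /gP[gx_in _] ->].
Qed.

Lemma count_bij (T1 T2 : eqType) (s1 : seq T1) (s2 : seq T2)
    (P1 : pred T1) (P2 : pred T2) (g : T1 -> T2) (h : T2 -> T1) :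
  uniq s1 -> uniq s2 ->
  {in [seq x <- s1 | P1 x], forall x, g x \in [seq y <- s2 | P2 y] /\ h (g x) = x} ->
  {in [seq y <- s2 | P2 y], forall y, h y \in [seq x <- s1 | P1 x] /\ g (h y) = y} ->
  count P1 s1 = count P2 s2.
Proof.
move=> uniq_s1 uniq_s2 gP hP; apply/eqP; rewrite eqn_leq.
by rewrite (count_le_in_inj uniq_s1 gP) (count_le_in_inj uniq_s2 hP).
Qed.

Lemma count_bounded_seqs_widen r b b' (P : pred (seq nat)) :
  b <= b' -> (forall s, P s -> all (fun x => x < b) s) ->
  count P (bounded_seqs r b) = count P (bounded_seqs r b').
Proof.
move=> le_b_b' P_lt; apply: (count_bij (g := id) (h := id)); rewrite ?uniq_bounded_seqs //.
  move=> s; rewrite !mem_filter !mem_bounded_seqs => /and3P[-> -> /allP s_lt] /=.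
  by split=> //; apply/allP => x /s_lt/leq_trans; apply.
by move=> s; rewrite !mem_filter !mem_bounded_seqs => /and3P[Ps -> _]; rewrite Ps P_lt.
Qed.

Fixpoint nonsquash_from (c : nat) (s : seq nat) : bool :=
  if s is x :: s' then (c <= x) && nonsquash_from (c + x) s' else true.

Lemma nonsquash_fromE c s :
  all (fun j => c + sumn (take j s) <= nth 0 s j) (iota 0 (size s)) = nonsquash_from c s.
Proof.
elim: s c => [|y s IH] c //=; rewrite addn0 -IH -(addn0 1) iotaDl all_map.
by congr andb; apply: eq_all => j /=; rewrite !add0n addnA.
Qed.

Lemma nonsquash_cons x s : nonsquash (x :: s) = nonsquash_from x s.
Proof.
rewrite /nonsquash /= -nonsquash_fromE -(addn0 1) iotaDl all_map.
by apply: eq_all => j /=; rewrite add0n.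
Qed.

Lemma nonsquashE s : nonsquash s = nonsquash_from 0 s.
Proof. by case: s => [|x s] //; rewrite nonsquash_cons. Qed.

Lemma nonsquash_from_rcons c s x :
  nonsquash_from c (rcons s x) = nonsquash_from c s && (c + sumn s <= x).
Proof.
elim: s c => [|y s IH] c /=; first by rewrite addn0 andbT.
by rewrite IH andbA addnA.
Qed.

Lemma nonsquash_rcons s x : nonsquash (rcons s x) = nonsquash s && (sumn s <= x).
Proof. by rewrite !nonsquashE nonsquash_from_rcons. Qed.

Lemma nonsquash_from_path c s : nonsquash_from c s -> path leq c s.
Proof.
elim: s c => [|x s IH] c //= /andP[le_c_x /IH path_x]; rewrite le_c_x.
exact: (path_le leq_trans (leq_addl c x) path_x).
Qed.

Lemma nonsquash_from_path_ltn c y s : y < c -> nonsquash_from c s -> path ltn y s.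
Proof.
elim: s c y => [|x s IH] c y lt_y_c //= /andP[le_c_x ns_s].
rewrite (leq_trans lt_y_c le_c_x) /=; apply: IH ns_s.
by rewrite -{1}[x]add0n ltn_add2r (leq_ltn_trans _ lt_y_c).
Qed.

Lemma path_leq_last x s : path leq x s -> all (fun y => y <= last x s) (x :: s).
Proof.
elim: s x => [|y s IH] x /=; first by rewrite leqnn.
case/andP=> le_x_y /IH /andP[le_y_last all_s].
by rewrite (leq_trans le_x_y le_y_last) le_y_last.
Qed.

Lemma nonsquash_all_ltn n s :
  nonsquash s -> all (fun x => x < n.+1) s = (last 0 s < n.+1).
Proof.
rewrite nonsquashE => /nonsquash_from_path/path_leq_last/andP[_ /allP le_last].
apply/allP/idP => [lt_n | lt_last x /le_last le_x]; last exact: leq_ltn_trans lt_last.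
by have := mem_last 0 s; rewrite inE => /predU1P[-> | /lt_n].
Qed.

Definition strict_nonsquash (s : seq nat) : bool :=
  [&& all (fun x => 0 < x) s, sorted ltn s & nonsquash s].

Lemma f_count n k : f n k = count strict_nonsquash (bounded_seqs k n.+1).
Proof. exact: card_bounded_seqs. Qed.

Lemma strict_nonsquash_cons2 x y s :
  strict_nonsquash (x :: y :: s) = [&& 0 < x, x < y & nonsquash_from (x + y) s].
Proof.
rewrite /strict_nonsquash andbA -(path_sortedE ltn_trans 0) nonsquash_cons /=.
case: (ltnP 0 x) => //= x_gt0; case: (ltnP x y) => //= lt_x_y; rewrite ?andbF //.
case ns: (nonsquash_from _ s); rewrite ?andbF // (ltnW lt_x_y) !andbT.
by rewrite (nonsquash_from_path_ltn _ ns) // -{1}[y]add0n ltn_add2r.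
Qed.

Fixpoint add_doubling (G : nat) (s : seq nat) : seq nat :=
  if s is x :: s' then x + G :: add_doubling G.*2 s' else [::].

Fixpoint sub_doubling (G : nat) (s : seq nat) : seq nat :=
  if s is x :: s' then x - G :: sub_doubling G.*2 s' else [::].

Lemma size_add_doubling G s : size (add_doubling G s) = size s.
Proof. by elim: s G => [|x s IH] G //=; rewrite IH. Qed.

Lemma size_sub_doubling G s : size (sub_doubling G s) = size s.
Proof. by elim: s G => [|x s IH] G //=; rewrite IH. Qed.

Lemma add_doublingK G : cancel (add_doubling G) (sub_doubling G).
Proof. by move=> s; elim: s G => [|x s IH] G //=; rewrite addnK IH. Qed.

Lemma sub_doublingK c G s :
  nonsquash_from (c + G) s -> add_doubling G (sub_doubling G s) = s.
Proof.
elim: s c G => [|x s IH] c G //= /andP[le_cG_x ns_s].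
have le_G_x : G <= x by apply: leq_trans le_cG_x; apply: leq_addl.
rewrite subnK // (IH (c + (x - G))) //.
by rewrite (_ : c + (x - G) + G.*2 = c + G + x) // -addnn; lia.
Qed.

Lemma nonsquash_from_add_doubling c G s :
  nonsquash_from (c + G) (add_doubling G s) = nonsquash_from c s.
Proof.
elim: s c G => [|x s IH] c G //=.
rewrite leq_add2r -(IH (c + x) G.*2) (_ : c + x + G.*2 = c + G + (x + G)) //.
by rewrite -addnn; lia.
Qed.

Lemma last_add_doubling d G x s :
  last d (add_doubling G (x :: s)) = last x s + G * 2 ^ size s.
Proof.
elim: s d G x => [|y s IH] d G x; first by rewrite /= muln1.
by rewrite -[LHS]/(last (x + G) (add_doubling G.*2 (y :: s))) IH expnS mulnA muln2.
Qed.

(* [gamma_lift q] adds [gamma (i + 1)], i.e. 1, 2, 3, 6, 12, ..., to the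
   [i]-th entry of [q]; from the third entry on, these are the increments
   added by [add_doubling 3]. *)
Definition gamma_lift (q : seq nat) : seq nat :=
  match q with
  | [::] => [::]
  | [:: x] => [:: x.+1]
  | x :: y :: s => x.+1 :: y.+2 :: add_doubling 3 s
  end.

Definition gamma_unlift (p : seq nat) : seq nat :=
  match p with
  | [::] => [::]
  | [:: x] => [:: x.-1]
  | x :: y :: s => x.-1 :: y.-2 :: sub_doubling 3 s
  end.

Lemma size_gamma_lift q : size (gamma_lift q) = size q.
Proof. by case: q => [|x [|y s]] //=; rewrite size_add_doubling. Qed.

Lemma size_gamma_unlift p : size (gamma_unlift p) = size p.
Proof. by case: p => [|x [|y s]] //=; rewrite size_sub_doubling. Qed.

Lemma gamma_liftK : cancel gamma_lift gamma_unlift.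
Proof. by case=> [|x [|y s]] //=; rewrite add_doublingK. Qed.

Lemma gamma_unliftK p : strict_nonsquash p -> gamma_lift (gamma_unlift p) = p.
Proof.
case: p => [|x [|y s]] //; first by case/and3P=> /andP[x_gt0 _] _ _ /=; rewrite prednK.
rewrite strict_nonsquash_cons2 => /and3P[x_gt0 lt_x_y ns_s] /=.
have y_gt1 : 1 < y by apply: leq_trans lt_x_y.
rewrite prednK // -subn2 -addn2 subnK // (@sub_doublingK (x.-1 + (y - 2))) //.
by rewrite (_ : _ + 3 = x + y) //; lia.
Qed.

Lemma strict_nonsquash_gamma_lift q : strict_nonsquash (gamma_lift q) = nonsquash q.
Proof.
case: q => [|x [|y s]] //; rewrite strict_nonsquash_cons2 nonsquash_cons /=.
by rewrite !ltnS (_ : x.+1 + y.+2 = x + y + 3) ?nonsquash_from_add_doubling //; lia.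
Qed.

Lemma gamma3 t : gamma t.+3 = 3 * 2 ^ t.
Proof. by case: t => [|t] //; rewrite /gamma /= subSS subn0. Qed.

Lemma last_gamma_lift q : last 0 (gamma_lift q) = last 0 q + gamma (size q).
Proof.
case: q => [|x [|y [|z s]]]; rewrite /= ?addn1 ?addn2 //.
by rewrite -[LHS]/(last y.+2 (add_doubling 3 (z :: s))) last_add_doubling gamma3.
Qed.

Lemma mem_bounded_gamma_lift n q :
  nonsquash q -> gamma (size q) <= n ->
  (gamma_lift q \in bounded_seqs (size q) n.+1) =
  (q \in bounded_seqs (size q) (n - gamma (size q)).+1).
Proof.
move=> ns_q le_gamma_n.
have /and3P[_ _ ns_lift] : strict_nonsquash (gamma_lift q)
  by rewrite strict_nonsquash_gamma_lift.
rewrite !mem_bounded_seqs size_gamma_lift eqxx !nonsquash_all_ltn //.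
by rewrite last_gamma_lift !ltnS leq_subRL // addnC.
Qed.

Lemma f_gamma_shift n k :
  f n k = if n < gamma k then 0
          else count nonsquash (bounded_seqs k (n - gamma k).+1).
Proof.
rewrite f_count; case: ltnP => [lt_n_gamma | le_gamma_n].
  apply/eqP; rewrite eqn0Ngt -has_count; apply/hasPn => p.
  rewrite mem_bounded_seqs => /andP[/eqP size_p p_lt]; apply/negP => sp.
  have /and3P[_ _ ns_p] := sp.
  have := last_gamma_lift (gamma_unlift p).
  rewrite gamma_unliftK // size_gamma_unlift size_p.
  move: p_lt; rewrite nonsquash_all_ltn //; lia.
apply: (count_bij (g := gamma_unlift) (h := gamma_lift)); rewrite ?uniq_bounded_seqs //.
  move=> p; rewrite !mem_filter => /andP[sp p_in].
  have ns_q : nonsquash (gamma_unlift p).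
    by rewrite -strict_nonsquash_gamma_lift gamma_unliftK.
  have size_q : size (gamma_unlift p) = k.
    by move: p_in; rewrite size_gamma_unlift mem_bounded_seqs => /andP[/eqP].
  rewrite ns_q gamma_unliftK //; split=> //.
  by have := mem_bounded_gamma_lift ns_q; rewrite size_q gamma_unliftK // => /(_ n le_gamma_n) <-.
move=> q; rewrite !mem_filter => /andP[ns_q q_in].
have size_q : size q = k by move: q_in; rewrite mem_bounded_seqs => /andP[/eqP].
rewrite strict_nonsquash_gamma_lift ns_q gamma_liftK; split=> //.
by have := mem_bounded_gamma_lift ns_q; rewrite size_q => /(_ n le_gamma_n) ->.
Qed.

Lemma count_leq_iota j b : count (fun x => j <= x) (iota 0 b) = b - j.
Proof.
elim: b => [|b IH] //; rewrite -addn1 iotaD count_cat IH /= add0n addn0.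
by case: leqP => /=; lia.
Qed.

Lemma sum_nat_pick (F : nat -> nat) j b :
  (b <= j -> F j = 0) -> \sum_(0 <= m < b) (j == m) * F m = F j.
Proof.
move=> Fj0; rewrite -[RHS](_ : (if 0 <= j < b then F j else 0) = F j); last first.
  by case: ltnP => // /Fj0.
rewrite -(big_nat1_eq addn) big_mkcond; apply: eq_bigr => m _.
by rewrite eq_sym; case: eqP; rewrite ?mul1n ?mul0n.
Qed.

Lemma count_nonsquash_split_last r N :
  count nonsquash (bounded_seqs r.+1 N.+1) =
  \sum_(0 <= m < N.+1)
     (N.+1 - m) * count (fun s => nonsquash s && (sumn s == m)) (bounded_seqs r N.+1).
Proof.
rewrite count_bounded_seqs_rcons.
transitivity (\sum_(s <- bounded_seqs r N.+1) \sum_(0 <= m < N.+1)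
                 (nonsquash s && (sumn s == m)) * (N.+1 - m)); last first.
  rewrite exchange_big /=; apply: eq_bigr => m _.
  by rewrite count_sumE big_distrr /=; apply: eq_bigr => s _; rewrite mulnC.
apply: eq_bigr => s _; case ns: (nonsquash s); last first.
  rewrite (eq_count (a2 := pred0)) ?count_pred0 ?big1 // => x.
  by rewrite nonsquash_rcons ns.
rewrite (eq_count (a2 := fun x => sumn s <= x)) => [|x]; last by rewrite nonsquash_rcons ns.
rewrite count_leq_iota; under eq_bigr do rewrite andTb.
by rewrite (@sum_nat_pick (fun m => N.+1 - m)) // => le_b_sum; apply/eqP; rewrite subn_eq0.
Qed.

Definition nonsquash_partition (m : nat) (s : seq nat) : bool :=
  [&& sumn s == m, all (fun x => 0 < x) s, sorted leq s & nonsquash s].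

Lemma nonsquash_partition_cons m x s :
  nonsquash_partition m (x :: s) = [&& 0 < x, nonsquash (x :: s) & sumn (x :: s) == m].
Proof.
rewrite /nonsquash_partition nonsquash_cons.
case ns: (nonsquash_from x s); last by rewrite !andbF.
have path_s := nonsquash_from_path ns; rewrite /= path_s.
case: (ltnP 0 x) => [x_gt0 | ]; last by rewrite andbF.
have pos_s : all (fun y => 0 < y) s.
  by apply: sub_all (order_path_min leq_trans path_s) => y; apply: leq_trans.
by rewrite pos_s andbT andbC.
Qed.

Lemma mem_leq_sumn s x : x \in s -> x <= sumn s.
Proof.
elim: s => //= y s IH; rewrite inE => /predU1P[-> | /IH le_x]; first exact: leq_addr.
exact: leq_trans le_x (leq_addl _ _).
Qed.

Lemma a_count m p N :
  m <= N -> a m p = count (nonsquash_partition m) (bounded_seqs p N.+1).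
Proof.
move=> le_m_N; rewrite -(count_bounded_seqs_widen _ (b := m.+1)) //.
  exact: card_bounded_seqs.
move=> s /and4P[/eqP sum_s _ _ _]; apply/allP => x /mem_leq_sumn.
by rewrite sum_s ltnS.
Qed.

Lemma size_leq_sumn s : all (fun x => 0 < x) s -> size s <= sumn s.
Proof. by elim: s => //= x s IH /andP[x_gt0 /IH]; rewrite -add1n; apply: leq_add. Qed.

Lemma a_eq0 m p : m < p -> a m p = 0.
Proof.
move=> lt_m_p; rewrite (a_count p (leqnn m)); apply/eqP.
rewrite eqn0Ngt -has_count; apply/hasPn => s; rewrite mem_bounded_seqs.
case/andP=> /eqP size_s _; apply/negP => /and4P[/eqP sum_s /size_leq_sumn].
by rewrite size_s sum_s leqNgt lt_m_p.
Qed.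

(* Stripping the leading zeros of a weakly non-squashing sequence leaves a
   non-squashing partition with fewer parts. *)
Lemma count_nonsquash_sumn r N m :
  m <= N ->
  count (fun s => nonsquash s && (sumn s == m)) (bounded_seqs r N.+1) =
  \sum_(0 <= p < r.+1) a m p.
Proof.
move=> le_m_N; elim: r => [|r IH].
  by rewrite big_nat1 (a_count _ le_m_N) bounded_seqs0 /= /nonsquash_partition andbT.
rewrite big_nat_recr //= -IH (a_count _ le_m_N) !count_bounded_seqsS !big_nat_recl //.
rewrite (eq_count (a1 := fun s => nonsquash_partition m (0 :: s)) (a2 := pred0)) => [|s];
  last by rewrite nonsquash_partition_cons.
rewrite count_pred0 add0n; congr (_ + _).
  by apply: eq_count => s; rewrite nonsquash_cons -nonsquashE.
by apply: eq_bigr => x _; apply: eq_count => s; rewrite nonsquash_partition_cons.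
Qed.

Lemma sum_weighted_a N r :
  \sum_(0 <= m < N.+1) (N.+1 - m) * \sum_(0 <= p < r.+1) a m p =
  \sum_(0 <= p < (minn r N).+1) \sum_(p <= m < N.+1) (N.+1 - m) * a m p.
Proof.
under eq_bigr => m _ do rewrite big_distrr /=.
rewrite exchange_big /= (big_cat_nat _ (n := (minn r N).+1)) //=; last first.
  by rewrite ltnS geq_minl.
rewrite [X in _ + X]big1_seq ?addn0 => [|p]; last first.
  move=> /andP[_]; rewrite mem_index_iota => /andP[lt_min_p lt_p_r].
  apply: big1_seq => m /andP[_]; rewrite mem_index_iota => /andP[_ lt_m_N].
  by rewrite a_eq0 ?muln0 //; lia.
apply: eq_big_nat => p; rewrite ltnS leq_min => /andP[_ /andP[_ le_p_N]].
rewrite (big_cat_nat _ (n := p)) ?leqW //= big1_seq ?add0n // => m.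
by rewrite mem_index_iota => /andP[_ lt_m_p]; rewrite a_eq0 ?muln0.
Qed.

Theorem theorem8 :
  (forall n : nat, f n 0 = 1) /\
  (forall n k : nat, 1 <= n -> 1 <= k ->
     f n k =
       (if n < gamma k then 0
        else \sum_(0 <= p < (minn (k - 1) (n - gamma k)).+1)
               \sum_(p <= m < (n - gamma k).+1)
                  (n - gamma k + 1 - m) * a m p)).
Proof.
split=> [n | n [//|r] _ _]; rewrite f_gamma_shift //.
case: ltnP => // _; rewrite count_nonsquash_split_last.
under eq_big_nat => m /andP[_ le_m_N] do rewrite count_nonsquash_sumn //.
by rewrite sum_weighted_a subn1 addn1.
Qed.
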